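(* For every finite set of formulas $T$ and formula $\phi$ of $\mathsf{JRC}$: if $T\vdash_{\mathsf{JRC}}\phi$ (there is a closed tableau for $\phi$ from $T$), then $T\models_{\mathsf{JRC}}\phi$.
   Context: Language of $\mathsf{JRC}$: countable sets $\mathsf{Var}$ (justification variables) and $\mathsf{Prop}$ (atoms). Terms $t ::= x \mid t+t$ ($x\in\mathsf{Var}$); formulas $\phi ::= p \mid {\sim}\phi \mid \phi\wedge\phi \mid \phi\to\phi \mid \phi\rightsquigarrow\phi \mid t{:}\phi$. A Routley relational model is $\mathcal M=(W,W_N,R,R_{Fm},R_{Tm},{*},\mathcal V)$ where $W$ is nonempty, $W_N\subseteq W$ nonempty (normal states); $R\subseteq W\times W\times W$ satisfies: for $w\in W_N$, $Rwvu$ iff $v=u$; $R_{Fm}$ assigns to each formula $\phi$ a relation $R_\phi\subseteq W\times W$; $R_{Tm}$ assigns to each term $t$ a relation $R_t\subseteq W\times W$; ${*}:W\to W$ with $w^{**}=w$; $\mathcal V:\mathsf{Prop}\to\mathcal P(W)$. Truth at every $w\in W$: $p$ iff $w\in\mathcal V(p)$; ${\sim}\phi$ iff $w^*\not\models\phi$; $\phi\wedge\psi$ iff both; $\phi\to\psi$ iff for all $v,u$ with $Rwvu$, $v\models\phi$ implies $u\models\psi$; $\phi\rightsquigarrow\psi$ iff $R_\phi(w)\subseteq[\psi]$; $t{:}\phi$ iff $R_t(w)\subseteq[\phi]$; $[\phi]=\{w\in W:w\models\phi\}$. A $\mathsf{JRC}$-model is a Routley relational model with: (1) $R_\phi(w)\subseteq[\phi]$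 for all $w\in W_N$ and all $\phi$; (2) for all $w\in W$, if $w\in[\phi]$ then $w\in R_\phi(w)$; (3) $R_{s+t}\subseteq R_s\cap R_t$. $T\models_{\mathsf{JRC}}\phi$ iff for every $\mathsf{JRC}$-model and every $w\in W_N$, if all members of $T$ are true at $w$ then $\phi$ is true at $w$. Tableaux: labels are elements of $\{0,1,2,\dots\}\cup\{0^\sharp,1^\sharp,2^\sharp,\dots\}$, with $\bar i=i^\sharp$ and $\overline{i^\sharp}=i$. Nodes have the forms $\phi,+x$; $\phi,-x$; $x\rhd_\phi y$; $x\rhd_t y$; $rxyz$. Rules (applied to a branch; $x,y,z$ arbitrary labels; $j,k$ natural numbers): (T$\sim$) from ${\sim}\phi,+x$ add $\phi,-\bar x$; (F$\sim$) from ${\sim}\phi,-x$ add $\phi,+\bar x$; (T$\wedge$) from $\phi\wedge\psi,+x$ add $\phi,+x$ and $\psi,+x$; (F$\wedge$) from $\phi\wedge\psi,-x$ split into $\phi,-x$ | $\psi,-x$; (T$\to$) from $\phi\to\psi,+x$ and $rxyz$ split into $\phi,-y$ | $\psi,+z$; (F$\to$) from $\phi\to\psi,-x$ add $rxjk$, $\phi,+j$, $\psi,-k$ with $j,k$ new, and $j=k$ if $x=0$; (T$\rightsquigarrow$) from $\phi\rightsquigarrow\psi,+x$ and $x\rhd_\phi y$ add $\psi,+y$; (F$\rightsquigarrow$) for $x\neq0$, from $\phi\rightsquigarrow\psi,-x$ add $x\rhd_\phi j$ and $\psi,-j$, $j$ new; (F$\rightsquigarrow_0$) from $\phi\rightsquigarrow\psi,-0$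 add $0\rhd_\phi j$, $\phi,+j$, $\psi,-j$, $j$ new; (Cut$_r$) if $\phi$ occurs on the branch as the antecedent of a $\rightsquigarrow$-formula and $x$ occurs on the branch, split into $\phi,-x$ | ($\phi,+x$ and $x\rhd_\phi x$); (T:) from $t{:}\phi,+x$ and $x\rhd_t y$ add $\phi,+y$; (F:) from $t{:}\phi,-x$ add $x\rhd_t j$ and $\phi,-j$, $j$ new; ($\rhd_+$) from $x\rhd_{s+t}y$ add $x\rhd_s y$ and $x\rhd_t y$; (Normality) for any $x$ occurring on the branch add $r0xx$. A branch is closed if it contains $\phi,+x$ and $\phi,-x$ for some $\phi,x$; a tableau is closed if all its branches are. $T\vdash_{\mathsf{JRC}}\phi$ iff there is a closed tableau whose initial single branch consists of $\psi,+0$ for each $\psi\in T$ and $\phi,-0$. *)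

From Stdlib Require Import List.
Import ListNotations.

Inductive term : Type :=
| TVar : nat -> term
| TPlus : term -> term -> term.

Inductive form : Type :=
| Atom : nat -> form
| Neg : form -> form
| And : form -> form -> form
| Imp : form -> form -> form
| Cimp : form -> form -> form
| Just : term -> form -> form.

Record RModel : Type := {
  W : Type;
  WN : W -> Prop;
  WN_nonempty : exists w, WN w;
  Rel : W -> W -> W -> Prop;
  Rel_normal : forall w, WN w -> forall v u, Rel w v u <-> v = u;
  Rfm : form -> W -> W -> Prop;
  Rtm : term -> W -> W -> Prop;
  star : W -> W;
  star_inv : forall w, star (star w) = w;
  Val : nat -> W -> Prop
}.

Fixpoint sat (M : RModel) (w : W M) (f : form) {struct f} : Prop :=
  match f with
  | Atom p => Val M p w
  | Neg a => ~ sat M (star M w) a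
  | And a c => sat M w a /\ sat M w c
  | Imp a c => forall v u, Rel M w v u -> sat M v a -> sat M u c
  | Cimp a c => forall v, Rfm M a w v -> sat M v c
  | Just t a => forall v, Rtm M t w v -> sat M v a
  end.

Definition JRCModel (M : RModel) : Prop :=
  (forall (w : W M) (f : form), WN M w -> forall v, Rfm M f w v -> sat M v f)
  /\ (forall (w : W M) (f : form), sat M w f -> Rfm M f w w)
  /\ (forall (s t : term) (w v : W M), Rtm M (TPlus s t) w v ->
        Rtm M s w v /\ Rtm M t w v).

Definition JRC_consequence (T : list form) (phi : form) : Prop :=
  forall M : RModel, JRCModel M ->
  forall w : W M, WN M w ->
    (forall psi, In psi T -> sat M w psi) -> sat M w phi.

(* label (n, false) is the natural number n; (n, true) is n^sharp *)
Definition label : Type := (nat * bool)%type.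
Definition bar (x : label) : label := (fst x, negb (snd x)).
Definition lab0 : label := (0, false).
Definition natlab (j : nat) : label := (j, false).

Inductive node : Type :=
| SF : form -> bool -> label -> node          (* phi, +x (true) / phi, -x (false) *)
| NRf : form -> label -> label -> node
| NRt : term -> label -> label -> node
| NR : label -> label -> label -> node.

Definition node_labels (n : node) : list label :=
  match n with
  | SF _ _ x => [x]
  | NRf _ x y => [x; y]
  | NRt _ x y => [x; y]
  | NR x y z => [x; y; z]
  end.

Definition branch := list node.

Definition occurs (x : label) (b : branch) : Prop :=
  exists n, In n b /\ In x (node_labels n).

Definition fresh (j : nat) (b : branch) : Prop :=
  ~ occurs (j, false) b /\ ~ occurs (j, true) b.

(* step b E : some rule is applicable to branch b, and its application splits
   b into the branches e ++ b for e in E. *)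
Inductive step (b : branch) : list (list node) -> Prop :=
| st_TNeg a x : In (SF (Neg a) true x) b -> step b [[SF a false (bar x)]]
| st_FNeg a x : In (SF (Neg a) false x) b -> step b [[SF a true (bar x)]]
| st_TAnd a c x : In (SF (And a c) true x) b ->
    step b [[SF a true x; SF c true x]]
| st_FAnd a c x : In (SF (And a c) false x) b ->
    step b [[SF a false x]; [SF c false x]]
| st_TImp a c x y z : In (SF (Imp a c) true x) b -> In (NR x y z) b ->
    step b [[SF a false y]; [SF c true z]]
| st_FImp a c x j k : In (SF (Imp a c) false x) b ->
    fresh j b -> fresh k b ->
    (x = lab0 -> j = k) -> (x <> lab0 -> j <> k) ->
    step b [[NR x (natlab j) (natlab k); SF a true (natlab j);
             SF c false (natlab k)]]
| st_TCimp a c x y : In (SF (Cimp a c) true x) b -> In (NRf a x y) b ->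
    step b [[SF c true y]]
| st_FCimp a c x j : x <> lab0 -> In (SF (Cimp a c) false x) b -> fresh j b ->
    step b [[NRf a x (natlab j); SF c false (natlab j)]]
| st_FCimp0 a c j : In (SF (Cimp a c) false lab0) b -> fresh j b ->
    step b [[NRf a lab0 (natlab j); SF a true (natlab j);
             SF c false (natlab j)]]
| st_Cut a c s y x : In (SF (Cimp a c) s y) b -> occurs x b ->
    step b [[SF a false x]; [SF a true x; NRf a x x]]
| st_TJ t a x y : In (SF (Just t a) true x) b -> In (NRt t x y) b ->
    step b [[SF a true y]]
| st_FJ t a x j : In (SF (Just t a) false x) b -> fresh j b ->
    step b [[NRt t x (natlab j); SF a false (natlab j)]]
| st_Plus s t x y : In (NRt (TPlus s t) x y) b ->
    step b [[NRt s x y; NRt t x y]]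
| st_Norm x : occurs x b -> step b [[NR lab0 x x]].

Definition closed_branch (b : branch) : Prop :=
  exists f x, In (SF f true x) b /\ In (SF f false x) b.

Inductive closable : branch -> Prop :=
| cl_closed b : closed_branch b -> closable b
| cl_step b E : step b E -> (forall e, In e E -> closable (e ++ b)) ->
    closable b.

Definition initial_branch (T : list form) (phi : form) : branch :=
  map (fun psi => SF psi true lab0) T ++ [SF phi false lab0].

Definition JRC_derivable (T : list form) (phi : form) : Prop :=
  closable (initial_branch T phi).

(* Interpret labels by a valuation g : nat -> W with g 0 normal, n ↦ g n and
   n^sharp ↦ (g n)^*, and call a branch faithful to g when all its nodes hold.
   Every rule transforms a faithful branch into at least one faithful extension:
   the branching rules by a classical case split, the rules introducing a new
   label j by redefining g at j as the counterexample world (which is harmless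
   because j does not occur on the branch).  A closed branch is never faithful,
   and the initial branch of a counterexample to T |= phi is faithful to the
   constant valuation at the counterexample world. *)
From Stdlib Require Import List Classical PeanoNat.
Import ListNotations.

Definition interp (M : RModel) (g : nat -> W M) (l : label) : W M :=
  if snd l then star M (g (fst l)) else g (fst l).

Definition holds (M : RModel) (L : label -> W M) (n : node) : Prop :=
  match n with
  | SF a true x => sat M (L x) a
  | SF a false x => ~ sat M (L x) a
  | NRf a x y => Rfm M a (L x) (L y)
  | NRt t x y => Rtm M t (L x) (L y)
  | NR x y z => Rel M (L x) (L y) (L z)
  end.

Definition faithful (M : RModel) (g : nat -> W M) (b : branch) : Prop :=
  WN M (g 0) /\ forall n, In n b -> holds M (interp M g) n.

Definition update (M : RModel) (g : nat -> W M) (j : nat) (v : W M) : nat -> W M :=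
  fun n => if Nat.eqb n j then v else g n.

Lemma holds_ext M (L L' : label -> W M) n :
  (forall l, In l (node_labels n) -> L l = L' l) -> holds M L n -> holds M L' n.
Proof.
  intros H; destruct n as [a [|] x|a x y|t x y|x y z]; simpl in *;
  rewrite ?(H x), ?(H y), ?(H z) by tauto; auto.
Qed.

Lemma interp_bar M g x : interp M g (bar x) = star M (interp M g x).
Proof. destruct x as [n [|]]; unfold interp, bar; simpl; auto. now rewrite star_inv. Qed.

Lemma update_eq M g j v : update M g j v j = v.
Proof. unfold update; now rewrite Nat.eqb_refl. Qed.

Lemma update_neq M g j v k : k <> j -> update M g j v k = g k.
Proof. intros H; unfold update; destruct (Nat.eqb_spec k j); easy. Qed.

Lemma interp_update_new M g j v : interp M (update M g j v) (natlab j) = v.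
Proof. apply update_eq. Qed.

Lemma interp_update_fresh M g j v b x : occurs x b -> fresh j b ->
  interp M (update M g j v) x = interp M g x.
Proof.
  intros Hx [Fj Fj']; destruct x as [m s]; unfold interp; simpl.
  rewrite update_neq; auto.
  intros ->; destruct s; [exact (Fj' Hx) | exact (Fj Hx)].
Qed.

Lemma occurs_SF a s x b : In (SF a s x) b -> occurs x b.
Proof. intros H; exists (SF a s x); simpl; auto. Qed.

Lemma fresh_neq0 j b : occurs lab0 b -> fresh j b -> j <> 0.
Proof. intros H [F _] ->; exact (F H). Qed.

Lemma faithful_update_fresh M g j v b : occurs lab0 b -> fresh j b ->
  faithful M g b -> faithful M (update M g j v) b.
Proof.
  intros H0 Fj [Hg Hb]; split.
  - rewrite update_neq; auto. intros E; now apply (fresh_neq0 j b).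
  - intros n Hn; apply holds_ext with (interp M g); auto.
    intros l Hl; symmetry; apply interp_update_fresh with b; auto.
    now exists n.
Qed.

Lemma faithful_app M g e b : faithful M g b ->
  (forall n, In n e -> holds M (interp M g) n) -> faithful M g (e ++ b).
Proof.
  intros [Hg Hb] He; split; auto.
  intros n Hn; apply in_app_or in Hn; destruct Hn; auto.
Qed.

Lemma not_forall_rel {A : Type} (R P : A -> Prop) :
  ~ (forall v, R v -> P v) -> exists v, R v /\ ~ P v.
Proof.
  intros N; apply NNPP; intros C; apply N; intros v Rv.
  apply NNPP; intros Pv; apply C; eauto.
Qed.

Lemma not_sat_Imp M w a c : ~ sat M w (Imp a c) ->
  exists v u, Rel M w v u /\ sat M v a /\ ~ sat M u c.
Proof.
  intros N; apply NNPP; intros C; apply N; intros v u R Ha.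
  apply NNPP; intros Hc; apply C; eauto.
Qed.

Definition extends_faithfully (M : RModel) (b : branch) (E : list (list node)) : Prop :=
  exists e g, In e E /\ faithful M g (e ++ b).

Section RuleSoundness.

Variable M : RModel.
Variables (b : branch) (g : nat -> W M).
Hypothesis b_rooted : occurs lab0 b.
Hypothesis b_faithful : faithful M g b.

Lemma holds_on_branch n : In n b -> holds M (interp M g) n.
Proof. apply b_faithful. Qed.

Lemma extends_by_valid e :
  (forall n, In n e -> holds M (interp M g) n) -> extends_faithfully M b [e].
Proof. intros Hn; exists e, g; simpl; auto using faithful_app. Qed.

Lemma extends_by_fresh_witness j v e : fresh j b ->
  (forall n, In n e -> holds M (interp M (update M g j v)) n) ->
  extends_faithfully M b [e].
Proof.
  intros Fj Hn; exists e, (update M g j v); simpl.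
  auto using faithful_app, faithful_update_fresh.
Qed.

Lemma extends_by_case P e1 e2 : (P -> forall n, In n e1 -> holds M (interp M g) n) ->
  (~ P -> forall n, In n e2 -> holds M (interp M g) n) ->
  extends_faithfully M b [e1; e2].
Proof.
  intros H1 H2; destruct (classic P) as [HP|HP].
  - exists e1, g; simpl; auto using faithful_app.
  - exists e2, g; simpl; auto using faithful_app.
Qed.

Lemma FImp_sound a c x j k : In (SF (Imp a c) false x) b ->
  fresh j b -> fresh k b -> (x = lab0 -> j = k) -> (x <> lab0 -> j <> k) ->
  extends_faithfully M b
    [[NR x (natlab j) (natlab k); SF a true (natlab j); SF c false (natlab k)]].
Proof.
  intros H Fj Fk E0 E1.
  destruct (not_sat_Imp M _ a c (holds_on_branch _ H)) as [v [u [R [Ha Hc]]]].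
  pose proof (occurs_SF _ _ _ _ H) as Hx.
  destruct (classic (x = lab0)) as [->|Nx].
  - (* at the normal world the triple relation is the diagonal, so one witness suffices *)
    specialize (E0 eq_refl); subst k.
    assert (v = u) as <- by exact (proj1 (Rel_normal M _ (proj1 b_faithful) v u) R).
    apply (extends_by_fresh_witness j v); auto.
    intros n [<-|[<-|[<-|[]]]]; simpl; unfold interp; simpl;
      rewrite ?update_eq, ?update_neq by (intros E; now apply (fresh_neq0 j b)); auto.
  - specialize (E1 Nx).
    exists [NR x (natlab j) (natlab k); SF a true (natlab j); SF c false (natlab k)],
      (update M (update M g j v) k u).
    split; [simpl; auto|].
    apply faithful_app; [auto using faithful_update_fresh|].
    intros n [<-|[<-|[<-|[]]]]; simpl;
      rewrite ?(interp_update_fresh _ _ k u b x), ?(interp_update_fresh _ _ j v b x) by auto;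
      unfold interp; simpl; rewrite ?update_eq, ?(update_neq _ _ k u j), ?update_eq; auto.
Qed.

Lemma extends_by_counterexample (R : W M -> W M -> Prop)
    (rel_node : label -> label -> node) c x j :
  (forall L y, holds M L (rel_node x y) = R (L x) (L y)) -> occurs x b -> fresh j b ->
  ~ (forall v, R (interp M g x) v -> sat M v c) ->
  extends_faithfully M b [[rel_node x (natlab j); SF c false (natlab j)]].
Proof.
  intros HR Hx Fj N.
  destruct (not_forall_rel _ _ N) as [v [Rv Hc]].
  apply (extends_by_fresh_witness j v); auto.
  intros n [<-|[<-|[]]]; [rewrite HR|]; simpl;
    rewrite ?(interp_update_fresh _ _ j v b x), interp_update_new by auto; auto.
Qed.

Lemma FCimp0_sound a c j :
  (forall w f, WN M w -> forall v, Rfm M f w v -> sat M v f) ->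
  In (SF (Cimp a c) false lab0) b -> fresh j b ->
  extends_faithfully M b
    [[NRf a lab0 (natlab j); SF a true (natlab j); SF c false (natlab j)]].
Proof.
  intros Hnormal H Fj.
  destruct (not_forall_rel _ _ (holds_on_branch _ H)) as [v [Rv Hc]].
  assert (Hj : j <> 0) by (intros E; now apply (fresh_neq0 j b)).
  apply (extends_by_fresh_witness j v); auto.
  intros n [<-|[<-|[<-|[]]]]; simpl; unfold interp; simpl;
    rewrite ?update_eq, ?update_neq by auto; auto.
  exact (Hnormal _ _ (proj1 b_faithful) v Rv).
Qed.

End RuleSoundness.

Lemma step_sound M (HM : JRCModel M) b g E :
  occurs lab0 b -> faithful M g b -> step b E -> extends_faithfully M b E.
Proof.
  intros H0 Hf Hs; destruct HM as [Hnormal [Hrefl Hplus]].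
  pose proof (holds_on_branch M b g Hf) as Hb.
  pose proof (extends_by_valid M b g Hf) as valid.
  pose proof (extends_by_case M b g Hf) as case.
  destruct Hs.
  - apply valid; intros n [<-|[]]; simpl; rewrite interp_bar; exact (Hb _ H).
  - apply valid; intros n [<-|[]]; simpl; rewrite interp_bar; exact (NNPP _ (Hb _ H)).
  - apply valid; intros n [<-|[<-|[]]]; apply (Hb _ H).
  - apply (case (~ sat M (interp M g x) a)); intros Ha n [<-|[]]; simpl; auto.
    intros Hc; apply (Hb _ H); split; [apply NNPP|]; auto.
  - apply (case (~ sat M (interp M g y) a)); intros Ha n [<-|[]]; simpl; auto.
    apply (Hb _ H _ _ (Hb _ H1)); apply NNPP; auto.
  - now apply (FImp_sound M b g H0 Hf a c x j k).
  - apply valid; intros n [<-|[]]; apply (Hb _ H _ (Hb _ H1)).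
  - apply (extends_by_counterexample M b g H0 Hf (Rfm M a) (NRf a)); auto.
    + exact (occurs_SF _ _ _ _ H1).
    + apply (Hb _ H1).
  - now apply (FCimp0_sound M b g H0 Hf a c j).
  - apply (case (~ sat M (interp M g x) a)); intros Ha n; simpl.
    + intros [<-|[]]; simpl; auto.
    + assert (sat M (interp M g x) a) by now apply NNPP.
      intros [<-|[<-|[]]]; simpl; auto.
  - apply valid; intros n [<-|[]]; apply (Hb _ H _ (Hb _ H1)).
  - apply (extends_by_counterexample M b g H0 Hf (Rtm M t) (NRt t)); auto.
    + exact (occurs_SF _ _ _ _ H).
    + apply (Hb _ H).
  - apply valid; intros n [<-|[<-|[]]]; apply (Hplus _ _ _ _ (Hb _ H)).
  - apply valid; intros n [<-|[]]; simpl.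
    now apply (Rel_normal M _ (proj1 Hf)).
Qed.

Lemma closable_sound M (HM : JRCModel M) b : closable b ->
  forall g, occurs lab0 b -> ~ faithful M g b.
Proof.
  induction 1 as [b [f [x [Hpos Hneg]]]|b E Hs _ IH]; intros g H0 Hf.
  - exact (proj2 Hf _ Hneg (proj2 Hf _ Hpos)).
  - destruct (step_sound M HM b g E H0 Hf Hs) as [e [g' [He Hf']]].
    apply (IH e He g'); auto.
    destruct H0 as [n [Hn Hl]]; exists n; split; auto using in_or_app.
Qed.

Lemma initial_branch_rooted T phi : occurs lab0 (initial_branch T phi).
Proof.
  exists (SF phi false lab0); split; [|simpl; auto].
  apply in_or_app; right; simpl; auto.
Qed.

Lemma initial_branch_faithful M (w : W M) T phi : WN M w ->
  (forall psi, In psi T -> sat M w psi) -> ~ sat M w phi ->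
  faithful M (fun _ => w) (initial_branch T phi).
Proof.
  intros Hw HT Hphi; split; auto; intros n Hn.
  apply in_app_or in Hn; destruct Hn as [Hn|[<-|[]]]; [|exact Hphi].
  apply in_map_iff in Hn; destruct Hn as [psi [<- Hpsi]]; exact (HT psi Hpsi).
Qed.

Theorem mainTheorem17 (T : list form) (phi : form) :
  JRC_derivable T phi -> JRC_consequence T phi.
Proof.
  intros Hd M HM w Hw HT; apply NNPP; intros Hphi.
  apply (closable_sound M HM _ Hd (fun _ => w) (initial_branch_rooted T phi)).
  now apply initial_branch_faithful.
Qed.
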